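(* Let $L$ be a positive integer and let $\Lambda$ be a subgroup of $\mathbb{Z}_L^2$. Then there exist unique integers $a,b$ with $a\mid L$, $b\mid L$, and a unique integer $s$ with $0\le s<b$ and $s\in\frac{ab}{\gcd(ab,L)}\mathbb{Z}$, such that $$\Lambda = A\mathbb{Z}_L^2=\begin{pmatrix} a & 0\\ s & b\end{pmatrix}\mathbb{Z}_L^2 .$$
   Context: $\mathbb{Z}_L=\mathbb{Z}/L\mathbb{Z}$. For an integer matrix $A$, $A\mathbb{Z}_L^2=\{Az \bmod L : z\in\mathbb{Z}_L^2\}$ denotes the image of $\mathbb{Z}_L^2$ under multiplication by $A$ with arithmetic modulo $L$. *)

From HB Require Import structures.
From mathcomp Require Import all_boot all_order all_algebra.
Set Implicit Arguments. Unset Strict Implicit. Unset Printing Implicit Defensive.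
Import GRing.Theory.
Local Open Scope ring_scope.

(* Z_L is modelled by the ordinal type 'I_L with L = n.+1 (its canonical
   additive group is Z/LZ, valid also for L = 1).  Z_L^2 is 'I_L * 'I_L. *)
Notation ZL2 L := ('I_L * 'I_L)%type.

Definition is_subgroup (n : nat) (Lam : {set ZL2 n.+1}) : Prop :=
  zmod_closed [in Lam].

(* The image [a 0; s b] Z_L^2 = { (a x, s x + b y) mod L : x, y in Z_L }. *)
Definition lower_tri_image (n : nat) (a s b : nat) : {set ZL2 n.+1} :=
  [set (x *+ a, x *+ s + y *+ b) | x : 'I_n.+1, y : 'I_n.+1].

Definition HNF_params (L a b s : nat) : Prop :=
  [/\ (a %| L)%N, (b %| L)%N, (s < b)%N & ((a * b) %/ gcdn (a * b) L %| s)%N].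

From mathcomp Require Import all_boot all_algebra.
From mathcomp Require Import zify.
Import GRing.Theory.

(* By Euclidean division inside
   Λ, the least positive first coordinate a of Λ divides every first
   coordinate, and the least positive b with (0, b) ∈ Λ divides every v with
   (0, v) ∈ Λ; reducing a partner of a modulo b gives s, and then Λ = A ℤ_L².
   The condition ab/gcd(ab, L) | s is equivalent to b | (L/a) s, which holds
   because (L/a)·(a, s) = (0, (L/a) s) lies in Λ.  Conversely a, b and s
   satisfy the same divisibility properties for any image A ℤ_L², which pins
   them down. *)

Lemma dvdn_divn_gcd b c s : 0 < c -> (b %/ gcdn b c %| s) = (b %| c * s).
Proof.
move=> c0; have c_dvd : c %| c * s := dvdn_mulr s (dvdnn c).
rewrite -[RHS]andbT -c_dvd -dvdn_lcm /lcmn [b * c]mulnC.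
by rewrite -muln_divA ?dvdn_gcdl // dvdn_pmul2l.
Qed.

Lemma dvdn_divn_gcd_mull a b c s : 0 < a -> 0 < c ->
  (a * b %/ gcdn (a * b) (a * c) %| s) = (b %| c * s).
Proof. by move=> a0 c0; rewrite -muln_gcdr divnMl // dvdn_divn_gcd. Qed.

Lemma dvdn_modeq {d L u w} : d %| L -> u = w %[mod L] -> (d %| u) = (d %| w).
Proof.
move=> dL e; rewrite (divn_eq u L) (divn_eq w L) e.
by rewrite !dvdn_addr // dvdn_mull.
Qed.

(* Subtracting (u %/ a) copies of a, with -1 represented by n modulo n.+1. *)
Lemma modn_add_pred_divn n u a : u + n * (u %/ a) * a = u %% a %[mod n.+1].
Proof.
have -> : u + n * (u %/ a) * a = u %/ a * a * n.+1 + u %% a.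
  by rewrite {1}(divn_eq u a); move: (u %/ a) (u %% a) => q r; nia.
by rewrite modnMDl.
Qed.

Lemma inZp_eq_mod n u w : inZp u = inZp w :> 'I_n.+1 <-> u = w %[mod n.+1].
Proof. by split=> [/(congr1 val) | e] //; apply: val_inj. Qed.

Lemma inZpD n u v : inZp (u + v) = (inZp u + inZp v)%R :> 'I_n.+1.
Proof. by apply: val_inj => /=; rewrite modnDm. Qed.

Lemma inZp0 n : inZp 0 = 0%R :> 'I_n.+1.
Proof. by apply: val_inj => /=; rewrite mod0n. Qed.

Lemma inZp_mulrn n x k : ((inZp x : 'I_n.+1) *+ k)%R = inZp (x * k).
Proof. by rewrite Zp_mulrn; apply: val_inj => /=; rewrite modnMml. Qed.

Definition lat_mem {n} (Lam : {set ZL2 n.+1}) (u v : nat) : bool :=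
  ((inZp u : 'I_n.+1), (inZp v : 'I_n.+1)) \in Lam.

Section SubgroupMembership.
Context {n : nat} {Lam : {set ZL2 n.+1}}.
Local Notation mem := (lat_mem Lam).

Lemma lat_mem_modeq {u v u' v'} : u = u' %[mod n.+1] -> v = v' %[mod n.+1] ->
  mem u v -> mem u' v'.
Proof. by rewrite /lat_mem => /inZp_eq_mod -> /inZp_eq_mod ->. Qed.

Hypothesis Lam_subgroup : is_subgroup Lam.

Lemma lat_mem0 : mem 0 0.
Proof. by case: Lam_subgroup => Lam0 _; rewrite /lat_mem inZp0. Qed.

Lemma lat_memD {u v u' v'} : mem u v -> mem u' v' -> mem (u + u') (v + v').
Proof.
case: Lam_subgroup => Lam0 LamB mem_uv mem_uv'; rewrite /lat_mem !inZpD.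
by have := LamB _ _ mem_uv (LamB _ _ Lam0 mem_uv'); rewrite sub0r opprK.
Qed.

Lemma lat_memMn k {u v} : mem u v -> mem (k * u) (k * v).
Proof.
move=> mem_uv; elim: k => [|k IHk]; first by rewrite !mul0n lat_mem0.
by rewrite !mulSn lat_memD.
Qed.

Lemma lat_memB {u v w} : mem u v -> mem u w -> mem 0 (v + n * w).
Proof.
move=> mem_uv mem_uw.
apply: lat_mem_modeq (lat_memD mem_uv (lat_memMn n mem_uw)) => //.
by rewrite -mulSn modnMr mod0n.
Qed.

Lemma lat_memL0 : mem n.+1 0.
Proof. by apply: lat_mem_modeq lat_mem0; rewrite ?modnn. Qed.

Lemma lat_mem0L : mem 0 n.+1.
Proof. by apply: lat_mem_modeq lat_mem0; rewrite ?modnn. Qed.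

Lemma lat_mem_modn_fst {u v a t} : mem u v -> mem a t ->
  mem (u %% a) (v + n * (u %/ a) * t).
Proof.
move=> mem_uv mem_at.
apply: lat_mem_modeq (lat_memD mem_uv (lat_memMn _ mem_at)) => //.
exact: modn_add_pred_divn.
Qed.

Lemma lat_mem_modn_snd {u v b} : mem u v -> mem 0 b -> mem u (v %% b).
Proof.
move=> mem_uv mem_0b.
apply: lat_mem_modeq (lat_memD mem_uv (lat_memMn _ mem_0b)).
  by rewrite muln0 addn0.
exact: modn_add_pred_divn.
Qed.

Lemma lat_min_dvdn_fst {a t} : 0 < a -> mem a t ->
    (forall k w, 0 < k -> mem k w -> a <= k) ->
  forall u v, mem u v -> a %| u.
Proof.
move=> a_gt0 mem_at min_a u v mem_uv; apply: contraT; rewrite /dvdn -lt0n.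
move=> rem_gt0; have := min_a _ _ rem_gt0 (lat_mem_modn_fst mem_uv mem_at).
by rewrite leqNgt ltn_pmod.
Qed.

Lemma lat_min_dvdn_snd {b} : 0 < b -> mem 0 b ->
    (forall k, 0 < k -> mem 0 k -> b <= k) ->
  forall v, mem 0 v -> b %| v.
Proof.
move=> b_gt0 mem_0b min_b v mem_0v; apply: contraT; rewrite /dvdn -lt0n.
move=> rem_gt0; have := min_b _ rem_gt0 (lat_mem_modn_snd mem_0v mem_0b).
by rewrite leqNgt ltn_pmod.
Qed.

Lemma lat_eq_lower_tri_image a s b : mem a s -> mem 0 b ->
    (forall u v, mem u v -> a %| u) -> (forall v, mem 0 v -> b %| v) ->
  Lam = lower_tri_image n a s b.
Proof.
move=> mem_as mem_0b dvd_fst dvd_snd; apply/setP => -[x y]; apply/idP/idP.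
- move=> Lam_xy; have mem_xy : mem x y by rewrite /lat_mem !valZpK.
  have [q x_eq] := dvdnP (dvd_fst _ _ mem_xy).
  have mem_0y : mem 0 (y + n * q * s).
    apply: lat_mem_modeq (lat_memD mem_xy (lat_memMn (n * q) mem_as)) => //.
    by rewrite x_eq -mulnA -mulSn modnMr mod0n.
  have [r y_eq] := dvdnP (dvd_snd _ mem_0y).
  apply/imset2P; exists (inZp q) (inZp r) => //.
  rewrite !inZp_mulrn -inZpD -(valZpK x) -(valZpK y).
  congr pair; apply/inZp_eq_mod; first by rewrite x_eq.
  have -> : q * s + r * b = q * s * n.+1 + y by rewrite -y_eq; nia.
  by rewrite modnMDl.
- case/imset2P=> {}x {}y _ _ ->; rewrite !Zp_mulrn -inZpD.
  have := lat_memD (lat_memMn x mem_as) (lat_memMn y mem_0b).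
  by rewrite muln0 addn0.
Qed.

Lemma lat_dvdn_hnf a s b : a %| n.+1 -> mem a s ->
  (forall v, mem 0 v -> b %| v) -> b %| n.+1 %/ a * s.
Proof.
move=> aL mem_as dvd_snd; apply: dvd_snd.
by apply: lat_mem_modeq (lat_memMn (n.+1 %/ a) mem_as); rewrite ?divnK ?modnn.
Qed.

Lemma lower_tri_image_exists :
  exists a b s, HNF_params n.+1 a b s /\ Lam = lower_tri_image n a s b.
Proof.
have exA : exists k, (0 < k) && [exists w : 'I_n.+1, mem k w].
  exists n.+1; apply/andP; split => //; apply/existsP; exists ord0.
  by apply: lat_mem_modeq lat_memL0.
have [a /andP[a_gt0 /existsP[t mem_at]] min_a] := ex_minnP exA.
have exB : exists k, (0 < k) && mem 0 k by exists n.+1; rewrite lat_mem0L.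
have [b /andP[b_gt0 mem_0b] min_b] := ex_minnP exB.
have dvd_fst : forall u v, mem u v -> a %| u.
  apply: (lat_min_dvdn_fst a_gt0 mem_at) => k w k_gt0 mem_kw.
  apply: min_a; rewrite k_gt0; apply/existsP; exists (inZp w).
  by apply: lat_mem_modeq mem_kw; rewrite ?modn_mod.
have dvd_snd : forall v, mem 0 v -> b %| v.
  apply: lat_min_dvdn_snd b_gt0 mem_0b _ => k k_gt0 mem_0k.
  by apply: min_b; rewrite k_gt0.
have aL : a %| n.+1 := dvd_fst _ _ lat_memL0.
move: (t %% b) (lat_mem_modn_snd mem_at mem_0b) (ltn_pmod t b_gt0).
move=> s mem_as s_lt_b {t mem_at}.
exists a, b, s; split; last exact: lat_eq_lower_tri_image.
split; rewrite ?(dvd_snd _ lat_mem0L) //.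
have L_eq : n.+1 = a * (n.+1 %/ a) by rewrite mulnC divnK.
rewrite {1}L_eq dvdn_divn_gcd_mull //; last by rewrite divn_gt0 // dvdn_leq.
exact: lat_dvdn_hnf aL mem_as dvd_snd.
Qed.

End SubgroupMembership.

Section LowerTriImage.
Context {n a s b : nat}.
Local Notation T := (lower_tri_image n a s b).

Lemma lat_mem_lower_tri_image x y : lat_mem T (x * a) (x * s + y * b).
Proof.
by apply/imset2P; exists (inZp x) (inZp y); rewrite // !inZp_mulrn inZpD.
Qed.

Lemma lat_mem_lower_tri_imageP u v : lat_mem T u v ->
  exists x y, u = x * a %[mod n.+1] /\ v = x * s + y * b %[mod n.+1].
Proof.
case/imset2P=> x y _ _ /pair_equal_spec[u_eq v_eq].
rewrite Zp_mulrn in u_eq; rewrite !Zp_mulrn -inZpD in v_eq.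
by exists x, y; split; apply/inZp_eq_mod.
Qed.

Lemma lower_tri_image_subgroup : is_subgroup T.
Proof.
split; first by apply/imset2P; exists 0%R 0%R; rewrite ?mul0rn ?addr0.
move=> _ _ /imset2P[x1 y1 _ _ ->] /imset2P[x2 y2 _ _ ->].
apply/imset2P; exists (x1 - x2)%R (y1 - y2)%R => //.
by apply: injective_projections; rewrite /= !mulrnBl // opprD addrACA.
Qed.

Hypothesis params : HNF_params n.+1 a b s.

Lemma lower_tri_image_dvdn_fst u v : lat_mem T u v -> a %| u.
Proof.
case: params => aL _ _ _ /lat_mem_lower_tri_imageP[x [y [u_eq _]]].
by rewrite (dvdn_modeq aL u_eq) dvdn_mull.
Qed.

(* (0, v) = (x a, x s + y b) forces L/a | x, and b | (L/a) s is the
   divisibility condition on s. *)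
Lemma lower_tri_image_dvdn_snd v : lat_mem T 0 v -> b %| v.
Proof.
case: params => aL bL s_lt_b hnf /lat_mem_lower_tri_imageP[x [y [x_eq v_eq]]].
have a_gt0 : 0 < a := dvdn_gt0 (ltn0Sn n) aL.
have L_eq : n.+1 = a * (n.+1 %/ a) by rewrite mulnC divnK.
have c_dvd_x : n.+1 %/ a %| x.
  by rewrite -(dvdn_pmul2r a_gt0) divnK // /dvdn -x_eq mod0n.
have c_gt0 : 0 < n.+1 %/ a by rewrite divn_gt0 // dvdn_leq.
move: hnf; rewrite {1}L_eq dvdn_divn_gcd_mull // => b_dvd_cs.
have b_dvd_xs : b %| x * s.
  by have [k ->] := dvdnP c_dvd_x; rewrite -mulnA dvdn_mull.
by rewrite (dvdn_modeq bL v_eq) dvdn_add // dvdn_mull.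
Qed.

End LowerTriImage.

Lemma lower_tri_image_dvdn {n a b s a' b' s'} :
    HNF_params n.+1 a b s -> HNF_params n.+1 a' b' s' ->
    lower_tri_image n a s b = lower_tri_image n a' s' b' ->
  a %| a' /\ b %| b'.
Proof.
move=> params params' im_eq; split.
- have := @lat_mem_lower_tri_image n a' s' b' 1 0.
  by rewrite -im_eq => /(lower_tri_image_dvdn_fst params); rewrite mul1n.
- have := @lat_mem_lower_tri_image n a' s' b' 0 1.
  by rewrite -im_eq !mul0n !mul1n => /(lower_tri_image_dvdn_snd params).
Qed.

Lemma lower_tri_image_inj {n a b s a' b' s'} :
    HNF_params n.+1 a b s -> HNF_params n.+1 a' b' s' ->
    lower_tri_image n a s b = lower_tri_image n a' s' b' ->
  [/\ a' = a, b' = b & s' = s].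
Proof.
move=> params params' im_eq.
have [a_dvd b_dvd] := lower_tri_image_dvdn params params' im_eq.
have [a'_dvd b'_dvd] := lower_tri_image_dvdn params' params (esym im_eq).
have ea : a' = a by apply/eqP; rewrite eqn_dvd a_dvd a'_dvd.
have eb : b' = b by apply/eqP; rewrite eqn_dvd b_dvd b'_dvd.
subst a' b'; split=> //.
have mem_as := @lat_mem_lower_tri_image n a s b 1 0.
have mem_as' := @lat_mem_lower_tri_image n a s' b 1 0.
rewrite mul0n !mul1n !addn0 -im_eq in mem_as mem_as'.
(* (a, s') - (a, s) lies in the image, so b | s' - s with both below b. *)
have := lat_memB lower_tri_image_subgroup mem_as' mem_as.
move=> /(lower_tri_image_dvdn_snd params) /dvdnP[k dvd_eq].
case: params params' => _ /dvdnP[c L_eq] s_lt_b _ [_ _ s'_lt_b _].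
have : s' + c * s * b = k * b + s by nia.
move/(congr1 (modn^~ b)); rewrite [s' + _]addnC !modnMDl.
by rewrite !modn_small.
Qed.

Theorem proposition2p1 (n : nat) (Lam : {set ('I_n.+1 * 'I_n.+1)%type}) :
  is_subgroup Lam ->
  exists a b s : nat,
    [/\ HNF_params n.+1 a b s, Lam = lower_tri_image n a s b &
        forall a' b' s' : nat,
          HNF_params n.+1 a' b' s' -> Lam = lower_tri_image n a' s' b' ->
          [/\ a' = a, b' = b & s' = s]].
Proof.
move=> Lam_subgroup.
have [a [b [s [params Lam_eq]]]] := lower_tri_image_exists Lam_subgroup.
exists a, b, s; split=> // a' b' s' params' Lam_eq'.
by apply: lower_tri_image_inj params params' _; rewrite -Lam_eq.
Qed.
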